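(* Let $t$ be an $\mathrm{SL}_2$-tiling and $n$ a positive integer. For each fixed $i\in\mathbb{Z}$ there are only finitely many $j\in\mathbb{Z}$ with $t_{ij}=n$, and for each fixed $j\in\mathbb{Z}$ there are only finitely many $i\in\mathbb{Z}$ with $t_{ij}=n$.
   Context: An $\mathrm{SL}_2$-tiling is a map $t:\mathbb{Z}\times\mathbb{Z}\to\{1,2,3,\dots\}$, $(i,j)\mapsto t_{ij}$, with $t_{ij}t_{i+1,j+1}-t_{i,j+1}t_{i+1,j}=1$ for all $i,j$. *)

From Stdlib Require Import ZArith List.
Open Scope Z_scope.

Definition SL2_tiling (t : Z -> Z -> Z) : Prop :=
  (forall i j, 1 <= t i j) /\
  (forall i j, t i j * t (i+1) (j+1) - t i (j+1) * t (i+1) j = 1).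

Definition Zfinite (P : Z -> Prop) : Prop :=
  exists l : list Z, forall x, P x -> In x l.

From Stdlib Require Import ZArith List Lia Classical.
Open Scope Z_scope.

(* Two consecutive rows c = t (i-1) and a = t i of an SL2-tiling have all
   their adjacent 2x2 minors equal to 1.  Since the entries are positive,
   the ratios c j / a j strictly decrease in j, so every minor
   c j * a k - c k * a j with j < k is at least 1.  Consequently, on the
   level set {j >= j0 | a j = n} of an occurrence a j0 = n, the map j |-> c j
   is injective and takes values in [1, c j0]; hence that half of the level
   set is finite.  The other half, {j <= j0 | a j = n}, is the first half
   for the point reflection (i, j) |-> (-i, -j) of the tiling, and the column
   statement is the row statement for the transposed tiling. *)

Lemma Zfinite_sub (P Q : Z -> Prop) :
  Zfinite Q -> (forall x, P x -> Q x) -> Zfinite P.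
Proof. intros [l Hl] HPQ. exists l. auto. Qed.

Lemma Zfinite_union (P Q : Z -> Prop) :
  Zfinite P -> Zfinite Q -> Zfinite (fun x => P x \/ Q x).
Proof.
  intros [l1 H1] [l2 H2]. exists (l1 ++ l2).
  intros x [Hx | Hx]; apply in_or_app; auto.
Qed.

Lemma Zfinite_subsingleton (P : Z -> Prop) :
  (forall x y, P x -> P y -> x = y) -> Zfinite P.
Proof.
  intros Huniq. destruct (classic (exists x, P x)) as [[x Hx] | Hnone].
  - exists (x :: nil). intros y Hy. left. exact (Huniq x y Hx Hy).
  - exists nil. intros y Hy. apply Hnone. now exists y.
Qed.

Lemma Zfinite_interval (lo hi : Z) : Zfinite (fun x => lo <= x <= hi).
Proof.
  exists (map (fun k => lo + Z.of_nat k) (seq 0 (Z.to_nat (hi - lo + 1)))).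
  intros x Hx. apply in_map_iff. exists (Z.to_nat (x - lo)).
  split; [lia | apply in_seq; lia].
Qed.

Lemma Zfinite_injective (P Q : Z -> Prop) (g : Z -> Z) :
  Zfinite Q ->
  (forall x, P x -> Q (g x)) ->
  (forall x y, P x -> P y -> g x = g y -> x = y) ->
  Zfinite P.
Proof.
  intros [l Hl] Hmaps Hinj.
  assert (Hin : forall x, P x -> In (g x) l) by auto.
  clear Hmaps Hl. revert P Hin Hinj.
  induction l as [| y l IH]; intros P Hin Hinj.
  - exists nil. intros x Hx. exact (Hin x Hx).
  - apply Zfinite_sub with (fun x => (P x /\ g x = y) \/ (P x /\ In (g x) l)).
    + apply Zfinite_union.
      * apply Zfinite_subsingleton. intros x z [Hx Ex] [Hz Ez].
        apply Hinj; congruence.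
      * apply IH; firstorder.
    + intros x Hx. destruct (Hin x Hx); auto.
Qed.

Lemma Zfinite_opp (P : Z -> Prop) : Zfinite P -> Zfinite (fun x => P (- x)).
Proof.
  intros [l Hl]. exists (map Z.opp l). intros x Hx.
  apply in_map_iff. exists (- x). split; [lia | auto].
Qed.

Definition positive_minors (c a : Z -> Z) : Prop :=
  forall j k, j < k -> 1 <= c j * a k - c k * a j.

(* If the lower row is positive and all adjacent minors equal 1, then all
   minors are positive: the minor D(j,k) grows along k, since
   a k * D(j,k+1) = a (k+1) * D(j,k) + a j. *)
Lemma adjacent_minors_positive (c a : Z -> Z) :
  (forall j, 1 <= a j) ->
  (forall j, c j * a (j + 1) - c (j + 1) * a j = 1) ->
  positive_minors c a.
Proof.
  intros Ha Hadj j.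
  assert (Hstep : forall k, j < k -> 1 <= c j * a k - c k * a j ->
                  1 <= c j * a (k + 1) - c (k + 1) * a j).
  { intros k _ Hk. pose proof (Hadj k). pose proof (Ha j). pose proof (Ha k).
    pose proof (Ha (k + 1)).
    assert (a k * (c j * a (k + 1) - c (k + 1) * a j)
            = a (k + 1) * (c j * a k - c k * a j) + a j) by nia.
    nia. }
  intros k Hjk.
  replace k with (j + 1 + Z.of_nat (Z.to_nat (k - j - 1))) by lia.
  induction (Z.to_nat (k - j - 1)) as [| d IH].
  - rewrite Z.add_0_r. specialize (Hadj j). lia.
  - rewrite Nat2Z.inj_succ, <- Z.add_1_r, Z.add_assoc. apply Hstep; lia.
Qed.

(* If the row c above a is positive with positive minors, then each level set
   of a is finite to the right of any of its points: there j |-> c j is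
   injective with values in [1, c j0]. *)
Lemma level_set_right_finite (c a : Z -> Z) (n j0 : Z) :
  (forall j, 1 <= c j) -> positive_minors c a -> 1 <= n -> a j0 = n ->
  Zfinite (fun j => a j = n /\ j0 <= j).
Proof.
  intros Hc Hmin Hn Hj0.
  apply Zfinite_injective with (fun x => 1 <= x <= c j0) c.
  - apply Zfinite_interval.
  - intros j [Hj Hle]. split; [apply Hc |].
    destruct (Z.eq_dec j0 j) as [-> | Hne]; [lia |].
    specialize (Hmin j0 j ltac:(lia)). rewrite Hj, Hj0 in Hmin. nia.
  - intros j k [Hj _] [Hk _] Ejk.
    destruct (Z.lt_trichotomy j k) as [Hlt | [Heq | Hlt]]; auto;
      [specialize (Hmin j k Hlt) | specialize (Hmin k j Hlt)];
      rewrite Hj, Hk, Ejk in Hmin; lia.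
Qed.

Lemma tiling_rows_positive_minors (t : Z -> Z -> Z) (i : Z) :
  SL2_tiling t -> positive_minors (t (i - 1)) (t i).
Proof.
  intros [Hpos Hdet]. apply adjacent_minors_positive; [apply Hpos |].
  intro j. pose proof (Hdet (i - 1) j) as H.
  replace (i - 1 + 1) with i in H by lia. exact H.
Qed.

Lemma tiling_reflect (t : Z -> Z -> Z) :
  SL2_tiling t -> SL2_tiling (fun i j => t (- i) (- j)).
Proof.
  intros [Hpos Hdet]. split; [intros; apply Hpos |].
  intros i j. pose proof (Hdet (- i - 1) (- j - 1)) as H.
  replace (- i - 1 + 1) with (- i) in H by lia.
  replace (- j - 1 + 1) with (- j) in H by lia.
  replace (- (i + 1)) with (- i - 1) by lia.
  replace (- (j + 1)) with (- j - 1) by lia. lia.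
Qed.

Lemma tiling_transpose (t : Z -> Z -> Z) :
  SL2_tiling t -> SL2_tiling (fun i j => t j i).
Proof.
  intros [Hpos Hdet]. split; [intros; apply Hpos |].
  intros i j. pose proof (Hdet j i). lia.
Qed.

Lemma row_finite (t : Z -> Z -> Z) (n i : Z) :
  SL2_tiling t -> Zfinite (fun j => t i j = n).
Proof.
  intros Ht. destruct (classic (exists j0, t i j0 = n)) as [[j0 Hj0] | Hnone].
  2: { exists nil. intros j Hj. apply Hnone. now exists j. }
  assert (Hn : 1 <= n) by (rewrite <- Hj0; apply Ht).
  assert (Hright : Zfinite (fun j => t i j = n /\ j0 <= j)).
  { apply level_set_right_finite with (t (i - 1));
      [apply Ht | apply tiling_rows_positive_minors | |]; auto. }
  assert (Hleft : Zfinite (fun j => t i j = n /\ j <= j0)).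
  { set (r := fun x y => t (- x) (- y)).
    assert (Hr : Zfinite (fun j => r (- i) j = n /\ - j0 <= j)).
    { apply level_set_right_finite with (r (- i - 1));
        [apply (tiling_reflect t Ht) |
         apply tiling_rows_positive_minors, tiling_reflect | |]; auto.
      unfold r. now rewrite !Z.opp_involutive. }
    apply Zfinite_sub with (1 := Zfinite_opp _ Hr).
    intros j [Hj Hle]. unfold r. rewrite !Z.opp_involutive. split; [auto | lia]. }
  apply Zfinite_sub with (1 := Zfinite_union _ _ Hright Hleft).
  intros j Hj. destruct (Z.le_ge_cases j0 j); auto.
Qed.

Theorem proposition6p1 (t : Z -> Z -> Z) (n : Z) :
  SL2_tiling t -> 1 <= n ->
  (forall i : Z, Zfinite (fun j => t i j = n)) /\
  (forall j : Z, Zfinite (fun i => t i j = n)).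
Proof.
  intros Ht _. split.
  - intro i. exact (row_finite t n i Ht).
  - intro j. exact (row_finite (fun x y => t y x) n j (tiling_transpose t Ht)).
Qed.
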